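(* Let $d\ge2$, let $\mathbf A,\mathbf B\in\overline{\mathbb Q}[t]$ be nonzero coprime polynomials, $\mathbf c=\mathbf A/\mathbf B$, and let $\lambda\in\overline{\mathbb Q}^*$. Then for all but finitely many $v\in\Omega_{\mathbb Q}$ we have $\log\max\{|\mathbf A_{\mathbf c,n}(\lambda)|_v,|\mathbf B_{\mathbf c,n}(\lambda)|_v\}=0$ for all $n\in\mathbb N$.
   Context: $\Omega_{\mathbb Q}$ is the set of places of $\mathbb Q$ (archimedean and $p$-adic, normalized so the product formula holds), and for each $v$ a fixed extension of $|\cdot|_v$ to $\overline{\mathbb Q}$ is used. The polynomials $\mathbf A_{\mathbf c,n},\mathbf B_{\mathbf c,n}\in\overline{\mathbb Q}[t]$ are defined by: $\mathbf A_{\mathbf c,0}=\mathbf A$, $\mathbf B_{\mathbf c,0}=\mathbf B$; if $\mathbf A(0)\neq 0$ then $\mathbf A_{\mathbf c,1}=\mathbf A^d+t\mathbf B^d$, $\mathbf B_{\mathbf c,1}=\mathbf A\mathbf B^{d-1}$, while if $\mathbf A(0)=0$ then $\mathbf A_{\mathbf c,1}=(\mathbf A^d+t\mathbf B^d)/t$, $\mathbf B_{\mathbf c,1}=\mathbf A\mathbf B^{d-1}/t$; and for $n\ge1$, $\mathbf A_{\mathbf c,n+1}=\mathbf A_{\mathbf c,n}^d+t\,\mathbf B_{\mathbf c,n}^d$, $\mathbf B_{\mathbf c,n+1}=\mathbf A_{\mathbf c,n}\mathbf B_{\mathbf c,n}^{d-1}$. (These give $\mathbf f_\lambda^n(\mathbf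 c(\lambda))=[\mathbf A_{\mathbf c,n}(\lambda):\mathbf B_{\mathbf c,n}(\lambda)]$ for $\mathbf f_\lambda(z)=(z^d+\lambda)/z$.) *)

From HB Require Import structures.
From mathcomp Require Import all_boot all_order all_algebra all_field.
Set Implicit Arguments. Unset Strict Implicit. Unset Printing Implicit Defensive.
Import Order.TTheory GRing.Theory Num.Theory.
Local Open Scope ring_scope.

Definition ABstep (d : nat) (AB : {poly algC} * {poly algC}) :
    {poly algC} * {poly algC} :=
  (AB.1 ^+ d + 'X * AB.2 ^+ d, AB.1 * AB.2 ^+ (d - 1)).

Definition ABfirst (d : nat) (A B : {poly algC}) : {poly algC} * {poly algC} :=
  if A.[0] != 0 then ABstep d (A, B)
  else ((A ^+ d + 'X * B ^+ d) %/ 'X, (A * B ^+ (d - 1)) %/ 'X).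

(* ABn d A B n = (A_{c,n}, B_{c,n}). *)
Definition ABn (d : nat) (A B : {poly algC}) (n : nat) :
    {poly algC} * {poly algC} :=
  match n with
  | 0 => (A, B)
  | m.+1 => iter m (ABstep d) (ABfirst d A B)
  end.

(* f : algC -> R is an absolute value on Qbar extending the p-adic absolute
   value |.|_p of Q, normalized by |p|_p = 1/p. *)
Definition padic_absval (R : realFieldType) (p : nat) (f : algC -> R) : Prop :=
  [/\ forall x, 0 <= f x,
      forall x, f x = 0 <-> x = 0,
      forall x y, f (x * y) = f x * f y,
      forall x y, f (x + y) <= Num.max (f x) (f y)
    & f p%:R = (p%:R)^-1].

(* Fix a prime p and an extension f of |.|_p to algC.  For p large enough,
   f is at most 1 on the finitely many algebraic numbers involved: lam,
   lam^-1, and the coefficients of A, B and of a Bezout relation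
   u A + v B = 1 (an algebraic number is p-integral once p exceeds the
   denominators of its minimal polynomial).  Hence f(lam) = 1, and the
   Bezout relation gives max(f A(lam), f B(lam)) = 1.  This condition is
   preserved by (a, b) |-> (a^d + lam b^d, a b^(d-1)) by the ultrametric
   inequality, and by the division by t = lam in the first step. *)

From HB Require Import structures.
From mathcomp Require Import all_boot all_order all_algebra all_field.
From mathcomp Require Import ring lra.
Import Order.TTheory GRing.Theory Num.Theory.
Local Open Scope ring_scope.
Set Implicit Arguments. Unset Strict Implicit.

Definition nonarch_absval (R : realFieldType) (f : algC -> R) : Prop :=
  [/\ forall x, 0 <= f x,
      forall x, f x = 0 <-> x = 0,
      forall x y, f (x * y) = f x * f y
    & forall x y, f (x + y) <= Num.max (f x) (f y)].

Lemma padic_absval_nonarch (R : realFieldType) p (f : algC -> R) :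
  padic_absval p f -> nonarch_absval f.
Proof. by case. Qed.

Lemma max_eq1P (R : realFieldType) (x y : R) :
  Num.max x y = 1 <-> [/\ x <= 1, y <= 1 & x = 1 \/ y = 1].
Proof.
split; first by case: (leP x y) => h e; split; try lra;
  first [by left; lra | by right; lra].
by case=> hx hy; case: (leP x y) => h [] e; lra.
Qed.

Lemma horner_divX (F : fieldType) (P : {poly F}) (x : F) :
  P.[0] = 0 -> x != 0 -> (P %/ 'X).[x] = P.[x] / x.
Proof.
move=> P0 nx; have XP : 'X %| P by rewrite -(subr0 'X) -polyC0 dvdp_XsubCl; apply/eqP.
by rewrite -{2}(divpK XP) hornerM hornerX mulfK.
Qed.

Section NonArchimedean.
Variables (R : realFieldType) (f : algC -> R).
Hypothesis hf : nonarch_absval f.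

Lemma absv_ge0 x : 0 <= f x. Proof. by case: hf. Qed.
Lemma absvM x y : f (x * y) = f x * f y. Proof. by case: hf. Qed.
Lemma absvD_le_max x y : f (x + y) <= Num.max (f x) (f y). Proof. by case: hf. Qed.
Lemma absv0 : f 0 = 0. Proof. by case: hf => _ h _ _; apply/h. Qed.

Lemma absv_neq0 x : x != 0 -> f x != 0.
Proof. by case: hf => _ h _ _ nx; apply/eqP => /h /eqP; rewrite (negbTE nx). Qed.

Lemma absv1 : f 1 = 1.
Proof.
apply: (mulfI (absv_neq0 (oner_neq0 algC))).
by rewrite -absvM !mulr1.
Qed.

Lemma absvN1 : f (-1) = 1.
Proof.
have sq : f (-1) * f (-1) = 1 by rewrite -absvM mulrNN mulr1 absv1.
have := absv_ge0 (-1); nra.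
Qed.

Lemma absvN x : f (- x) = f x.
Proof. by rewrite -mulN1r absvM absvN1 mul1r. Qed.

Lemma absvX x n : f (x ^+ n) = f x ^+ n.
Proof. by elim: n => [|n IH]; rewrite ?expr0 ?absv1 // !exprS absvM IH. Qed.

Lemma absvV x : x != 0 -> f x^-1 = (f x)^-1.
Proof.
move=> nx; apply: (mulfI (absv_neq0 nx)).
by rewrite -absvM !mulfV ?absv1 ?absv_neq0.
Qed.

Lemma absvD_eqr x y : f x < f y -> f (x + y) = f y.
Proof.
move=> lt; have le1 := absvD_le_max x y.
have le2 := absvD_le_max (x + y) (- x); rewrite addrC addKr absvN in le2.
move: le1 le2; case: (leP (f x) (f y)); case: (leP (f (x + y)) (f x)); lra.
Qed.

Lemma absv_sum_le (I : Type) (r : seq I) (P : pred I) (F : I -> algC) (M : R) :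
  0 <= M -> (forall i, P i -> f (F i) <= M) -> f (\sum_(i <- r | P i) F i) <= M.
Proof.
move=> M0 hF; apply: (big_ind (fun z => f z <= M)) => //; first by rewrite absv0.
by move=> a b ha hb; apply: le_trans (absvD_le_max a b) _; rewrite ge_max ha hb.
Qed.

Lemma absv_nat_le1 n : f n%:R <= 1.
Proof.
elim: n => [|n IH]; first by rewrite absv0 ler01.
rewrite -addn1 natrD; apply: le_trans (absvD_le_max _ _) _.
by rewrite absv1 ge_max IH lexx.
Qed.

Lemma absv_int_le1 z : f z%:~R <= 1.
Proof. by case: z => n; rewrite ?NegzE ?intrN ?absvN absv_nat_le1. Qed.

Lemma absv_unit x : x != 0 -> f x <= 1 -> f x^-1 <= 1 -> f x = 1.
Proof.
move=> nx le1; rewrite absvV // invf_le1 => [ge1|]; first by apply/le_anti; rewrite le1.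
by rewrite lt_neqAle eq_sym absv_neq0 // absv_ge0.
Qed.

Lemma absv_horner_le1 (P : {poly algC}) x :
  (forall i, f P`_i <= 1) -> f x <= 1 -> f P.[x] <= 1.
Proof.
move=> hP hx; rewrite horner_coef; apply: absv_sum_le => // i _.
rewrite absvM absvX; have := exprn_ile1 i (absv_ge0 x) hx.
have := absv_ge0 P`_i; have := exprn_ge0 i (absv_ge0 x); have := hP i; nra.
Qed.

(* If f x > 1, the leading term x^n would dominate all the others. *)
Lemma absv_root_monic_le1 (Q : {poly algC}) x :
  Q \is monic -> root Q x -> (forall i, f Q`_i <= 1) -> f x <= 1.
Proof.
move=> monQ rootQ hQ; rewrite leNgt; apply/negP => gt1.
have sQ : (1 < size Q)%N by apply: root_size_gt1 rootQ; rewrite monic_neq0.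
set n := (size Q).-1; have n0 : (0 < n)%N by rewrite -ltnS prednK // ltnW.
have Qn : Q`_n = 1 by rewrite -(monicP monQ) lead_coefE.
have xn : x ^+ n = - \sum_(i < n) Q`_i * x ^+ i.
  apply/eqP; rewrite -addr_eq0 addrC; apply/eqP.
  move: rootQ; rewrite /root horner_coef -(prednK (ltnW sQ)) big_ord_recr /=.
  by rewrite Qn mul1r => /eqP.
have le_n1 : f (x ^+ n) <= f x ^+ n.-1.
  rewrite xn absvN; apply: absv_sum_le => [|i _]; first by apply: exprn_ge0; lra.
  rewrite absvM absvX; apply: (@le_trans _ _ (f x ^+ i)).
    by rewrite -[leRHS]mul1r ler_wpM2r ?hQ // exprn_ge0 ?absv_ge0.
  by rewrite ler_eXn2l // -ltnS prednK.
have pos : 0 < f x ^+ n.-1 by apply: exprn_gt0; lra.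
by move: le_n1; rewrite absvX -(prednK n0) exprS; nra.
Qed.

Lemma absv_max_bezout a b u v : u * a + v * b = 1 ->
  f a <= 1 -> f b <= 1 -> f u <= 1 -> f v <= 1 -> Num.max (f a) (f b) = 1.
Proof.
move=> e ha hb hu hv; apply/le_anti; rewrite ge_max ha hb /=.
have := absvD_le_max (u * a) (v * b); rewrite e absv1 !absvM.
have := absv_ge0 a; have := absv_ge0 b; have := absv_ge0 u; have := absv_ge0 v.
case: (leP (f u * f a) (f v * f b)); case: (leP (f a) (f b)); nra.
Qed.

Section Orbit.
Variables (d : nat) (lam : algC).
Hypotheses (d_gt0 : (0 < d)%N) (lam1 : f lam = 1).

Lemma absv_pow_lt1 x : f x < 1 -> f x ^+ d < 1.
Proof. by move=> lt1; rewrite exprn_ilt1 ?absv_ge0 // -lt0n. Qed.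

Lemma absv_ABstep_max a b : Num.max (f a) (f b) = 1 ->
  Num.max (f (a ^+ d + lam * b ^+ d)) (f (a * b ^+ (d - 1))) = 1.
Proof.
move=> /max_eq1P[ha hb hab].
have hbd1 : f b ^+ (d - 1) <= 1 by rewrite exprn_ile1 ?absv_ge0.
have hB : f (a * b ^+ (d - 1)) <= 1.
  by rewrite absvM absvX; have := absv_ge0 a; have := exprn_ge0 (d - 1) (absv_ge0 b); nra.
have hA : f (a ^+ d + lam * b ^+ d) <= 1.
  apply: le_trans (absvD_le_max _ _) _.
  by rewrite absvM !absvX lam1 mul1r ge_max !exprn_ile1 ?absv_ge0.
apply/max_eq1P; split => //.
have [a1|a_ne1] := eqVneq (f a) 1.
  have [b1|b_ne1] := eqVneq (f b) 1.
    by right; rewrite absvM absvX a1 b1 expr1n mulr1.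
  left; rewrite addrC absvD_eqr; first by rewrite absvX a1 expr1n.
  by rewrite absvM !absvX lam1 a1 mul1r expr1n absv_pow_lt1 // lt_neqAle b_ne1.
have b1 : f b = 1 by case: hab => // a1; rewrite a1 eqxx in a_ne1.
left; rewrite absvD_eqr; first by rewrite absvM absvX lam1 b1 expr1n mul1r.
by rewrite absvM !absvX lam1 b1 expr1n mul1r absv_pow_lt1 // lt_neqAle a_ne1.
Qed.

(* In the branch A(0) = 0, dividing by t is harmless at t = lam since f lam = 1. *)
Lemma absv_ABfirst_max A B : lam != 0 -> Num.max (f A.[lam]) (f B.[lam]) = 1 ->
  Num.max (f (ABfirst d A B).1.[lam]) (f (ABfirst d A B).2.[lam]) = 1.
Proof.
move=> nlam AB1; rewrite /ABfirst; case: ifP => [_|/negbFE/eqP A0].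
  by rewrite /= !hornerE absv_ABstep_max.
have div_lam q : f (q / lam) = f q by rewrite absvM absvV // lam1 invr1 mulr1.
have a0 : (A ^+ d + 'X * B ^+ d).[0] = 0.
  by rewrite !hornerE A0 expr0n (gtn_eqF d_gt0).
have b0 : (A * B ^+ (d - 1)).[0] = 0 by rewrite hornerM A0 mul0r.
by rewrite /= !horner_divX // !div_lam !hornerE absv_ABstep_max.
Qed.

Lemma absv_ABn_max A B n : lam != 0 -> Num.max (f A.[lam]) (f B.[lam]) = 1 ->
  Num.max (f (ABn d A B n).1.[lam]) (f (ABn d A B n).2.[lam]) = 1.
Proof.
case: n => [//|m] /= nlam AB1.
elim: m => [|m IH]; first exact: absv_ABfirst_max.
by rewrite iterS /ABstep /= !hornerE absv_ABstep_max.
Qed.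

End Orbit.
End NonArchimedean.

Section PAdic.
Variables (R : realFieldType) (p : nat) (f : algC -> R).
Hypotheses (p_pr : prime p) (hf : padic_absval p f).
Let hna := padic_absval_nonarch hf.

Lemma absv_p_lt1 : f p%:R < 1.
Proof.
case: hf => _ _ _ _ ->; rewrite invf_lt1 ?ltr1n ?prime_gt1 //.
by rewrite ltr0n prime_gt0.
Qed.

(* Bezout: u n = 1 - v p with f (v p) < 1, so f (u n) = 1. *)
Lemma absv_nat_coprime n : ~~ (p %| n)%N -> f n%:R = 1.
Proof.
move=> pn; have [u [v bez]] := Bezoutz n%:Z p%:Z.
have g1 : gcdz n%:Z p%:Z = 1.
  by rewrite /gcdz /= gcdnC (eqP (_ : coprime p n)) ?prime_coprime.
have e : (u%:~R * n%:R : algC) = 1 + - (v%:~R * p%:R).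
  have := congr1 (fun z : int => z%:~R : algC) bez.
  rewrite g1 /= rmorphD !rmorphM /= !pmulrn rmorph1 => e.
  by apply: (addIr (v%:~R * p%:R)); rewrite e addrNK.
have vp : f (- (v%:~R * p%:R)) < f 1.
  rewrite absvN // absvM // absv1 //; have := absv_p_lt1.
  have := absv_int_le1 hna v; have := absv_ge0 hna v%:~R.
  have := absv_ge0 hna p%:R; nra.
have un : f u%:~R * f n%:R = 1 by rewrite -absvM // e addrC absvD_eqr // absv1.
have := absv_int_le1 hna u; have := absv_nat_le1 hna n.
have := absv_ge0 hna u%:~R; have := absv_ge0 hna n%:R; nra.
Qed.

Lemma absv_ratr_le1 q : (`|denq q| < p)%N -> f (ratr q) <= 1.
Proof.
move=> lt; have dpos := denq_gt0 q.
have dq : (denq q)%:~R = (`|denq q|%N)%:R :> algC.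
  by rewrite -[in LHS](gez0_abs (ltW dpos)) pmulrn.
have pdq : ~~ (p %| `|denq q|)%N.
  by apply: contraTN lt => /dvdn_leq; rewrite absz_gt0 gt_eqF // -leqNgt => ->.
rewrite /ratr absvM // absvV ?intr_eq0 ?gt_eqF // dq absv_nat_coprime // invr1.
by rewrite mulr1 absv_int_le1.
Qed.

End PAdic.

Lemma padic_absv_le1_large (R : realFieldType) (x : algC) : exists N : nat,
  forall p, prime p -> (N < p)%N -> forall f : algC -> R, padic_absval p f ->
  f x <= 1.
Proof.
have [P [DP _] _] := minCpolyP x.
exists (\max_(i < size P) `|denq P`_i|%N) => p p_pr lt f hf.
have hna := padic_absval_nonarch hf.
apply: (absv_root_monic_le1 hna (Q := minCpoly x)).
- exact: minCpoly_monic.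
- exact: root_minCpoly.
- move=> i; rewrite DP coef_map /=; case: (ltnP i (size P)) => hi.
    apply: (absv_ratr_le1 p_pr hf); apply: leq_ltn_trans lt.
    exact: (leq_bigmax_cond (Ordinal hi)).
  by rewrite nth_default // rmorph0 absv0 ?ler01.
Qed.

Lemma padic_absv_seq_le1_large (R : realFieldType) (s : seq algC) : exists N : nat,
  forall p, prime p -> (N < p)%N -> forall f : algC -> R, padic_absval p f ->
  {in s, forall c, f c <= 1}.
Proof.
elim: s => [|a s [N HN]]; first by exists 0%N.
have [M HM] := padic_absv_le1_large R a.
exists (maxn N M) => p p_pr; rewrite gtn_max => /andP[ltN ltM] f hf c.
rewrite inE => /orP[/eqP ->|cs]; first exact: HM p_pr ltM f hf.
exact: HN p_pr ltN f hf c cs.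
Qed.

Theorem proposition4p1 (R : realFieldType) (d : nat) (A B : {poly algC})
    (lam : algC) :
  (2 <= d)%N -> A != 0 -> B != 0 -> coprimep A B -> lam != 0 ->
  forall absv : nat -> algC -> R,
    (forall p, prime p -> padic_absval p (absv p)) ->
    exists N : nat, forall p : nat, prime p -> (N < p)%N ->
      forall n : nat,
        Num.max (absv p (ABn d A B n).1.[lam]) (absv p (ABn d A B n).2.[lam]) = 1.
Proof.
move=> d2 _ _ AB_cop nlam absv habsv.
have [[U V] /= bez] := Bezout_eq1_coprimepP _ _ AB_cop.
set s := [:: lam, lam^-1 & A ++ B ++ U ++ V].
have [N HN] := padic_absv_seq_le1_large R s.
exists N => p p_pr ltN n.
have hna := padic_absval_nonarch (habsv p p_pr).
have le1 := HN p p_pr ltN _ (habsv p p_pr).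
have lam_le1 : absv p lam <= 1 by apply: le1; rewrite inE eqxx.
have at_lam (P : {poly algC}) : {subset (P : seq algC) <= s} -> absv p P.[lam] <= 1.
  move=> Ps; apply: (absv_horner_le1 hna) lam_le1 => i.
  case: (ltnP i (size P)) => [/(mem_nth 0)/Ps/le1 //|hi].
  by rewrite nth_default // (absv0 hna) ler01.
have lam1 : absv p lam = 1 by apply: (absv_unit hna); rewrite // le1 // !inE eqxx orbT.
apply: (absv_ABn_max hna (ltnW d2) lam1 _ nlam).
apply: (absv_max_bezout hna (u := U.[lam]) (v := V.[lam])).
- by have := congr1 (horner^~ lam) bez; rewrite /= hornerD !hornerM hornerC.
all: by apply: at_lam => c cP; rewrite !inE !mem_cat cP ?orbT.
Qed.
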